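(* Let $\gamma:\mathbb{Z}\to\mathbb{R}^3$ be a discrete curve whose vertices $\gamma_i$ all lie in a common affine plane $P\subset\mathbb{R}^3$. Let $i\in\mathbb{Z}$, and assume that the discrete curvature $\kappa_i$, the normal vector $N_i$ and the discrete torsion $\tau_i$ of $\gamma$ at $\gamma_i$ (defined in the context) are well defined. Then $\tau_i=0$. Consequently, whenever the discrete torsion of a planar discrete curve is defined, it vanishes at every vertex.
   Context: Quaternions: $\mathbb{H}=\{[r,v]: r\in\mathbb{R},\ v\in\mathbb{R}^3\}$ with $[r,v]+[s,w]=[r+s,v+w]$, $[r,v]\cdot[s,w]=[rs-\langle v,w\rangle,\ rw+sv+v\times w]$, conjugate $\overline{[r,v]}=[r,-v]$, norm $|q|=\sqrt{q\bar q}=\sqrt{r^2+\|v\|^2}$, inverse $q^{-1}=\bar q/|q|^2$. The imaginary part of $q=[r,v]$ is $\operatorname{Im} q=v$, and $\mathbb{R}^3$ is identified with the pure imaginary quaternions $\{[0,v]\}$. Every $q$ has a polar form $q=|q|[\cos\phi,\,u\sin\phi]$ with $\|u\|=1$, $\phi\in[0,\pi]$, and $\sqrt{q}:=\sqrt{|q|}[\cos\frac{\phi}{2},\,u\sin\frac{\phi}{2}]$ (used only for $q\notin\mathbb{R}_{\le 0}$). Cross-ratio: $\operatorname{cr}(a,b,c,d)=(a-b)(b-c)^{-1}(c-d)(d-a)^{-1}$. ''Diagonal point'': $f(a,b,c,d)=\big((b-a)(c-a)^{-1}\sqrt{\operatorname{cr}(c,a,b,d)}+1\big)^{-1}\big((b-a)(c-a)^{-1}\sqrt{\operatorname{cr}(c,a,b,d)}\,c+b\big)$.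 A discrete curve is a map $\gamma:\mathbb{Z}\to\mathbb{R}^3$, $i\mapsto\gamma_i$. For a vertex $\gamma_i$ define the inserting points $A_i=f(\gamma_{i+2},\gamma_{i-1},\gamma_i,\gamma_{i+1})$, $B_i=f(\gamma_{i-1},\gamma_i,\gamma_{i+1},\gamma_{i+2})$, $C_i=f(\gamma_i,\gamma_{i+1},\gamma_{i+2},\gamma_{i-1})$, $D_i=f(\gamma_{i+1},\gamma_{i+2},\gamma_{i-1},\gamma_i)$; these are pure imaginary, i.e. points of $\mathbb{R}^3$, and are concyclic. The osculating circle $k_i$ of $\gamma$ at $\gamma_i$ is the circle through $A_i,B_i,C_i,D_i$; the discrete curvature $\kappa_i$ is the inverse of its radius; the normal vector $N_i$ is the unit normal vector of $k_i$ at $B_i$ (the unit vector in the plane of $k_i$ along the radius through $B_i$). The discrete torsion at $\gamma_i$ is $\tau_i=-\dfrac{9\,\langle \operatorname{Im}\operatorname{cr}(\gamma_{i-1},\gamma_i,\gamma_{i+1},\gamma_{i+2}),\,N_i\rangle}{2\kappa_i\,\|\gamma_i-\gamma_{i+1}\|^2}.$ ''Well defined'' means that all inverses and square roots above exist (vertices $\gamma_{i-1},\dots,\gamma_{i+2}$ pairwise distinct, no relevant cross-ratio is a non-positive real), and that $A_i,B_i,C_i,D_i$ determine a circle of positive finite radius. *)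

From HB Require Import structures.
From mathcomp Require Import all_boot all_order all_algebra.
From mathcomp Require Import all_classical all_reals all_analysis.
Set Implicit Arguments.
Unset Strict Implicit.
Unset Printing Implicit Defensive.
Import Order.TTheory GRing.Theory Num.Theory.
Local Open Scope ring_scope.

Section Quaternions.
Variable R : realType.

Record vec3 := V3 { vx : R; vy : R; vz : R }.

Definition vadd (v w : vec3) := V3 (vx v + vx w) (vy v + vy w) (vz v + vz w).
Definition vopp (v : vec3) := V3 (- vx v) (- vy v) (- vz v).
Definition vsub (v w : vec3) := vadd v (vopp w).
Definition vscale (a : R) (v : vec3) := V3 (a * vx v) (a * vy v) (a * vz v).
Definition v0 := V3 0 0 0.
Definition dot (v w : vec3) : R := vx v * vx w + vy v * vy w + vz v * vz w.
Definition cross (v w : vec3) : vec3 :=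
  V3 (vy v * vz w - vz v * vy w)
     (vz v * vx w - vx v * vz w)
     (vx v * vy w - vy v * vx w).
Definition vnorm (v : vec3) : R := Num.sqrt (dot v v).

Record quat := Qt { qre : R; qim : vec3 }.

Definition qadd (p q : quat) := Qt (qre p + qre q) (vadd (qim p) (qim q)).
Definition qsub (p q : quat) := Qt (qre p - qre q) (vsub (qim p) (qim q)).
Definition qmul (p q : quat) :=
  Qt (qre p * qre q - dot (qim p) (qim q))
     (vadd (vadd (vscale (qre p) (qim q)) (vscale (qre q) (qim p)))
           (cross (qim p) (qim q))).
Definition qconj (q : quat) := Qt (qre q) (vopp (qim q)).
Definition qnorm (q : quat) : R := Num.sqrt (qre q ^+ 2 + dot (qim q) (qim q)).
Definition qscale (a : R) (q : quat) := Qt (a * qre q) (vscale a (qim q)).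
(* q^{-1} = conj q / |q|^2  (only used when q <> 0) *)
Definition qinv (q : quat) := qscale ((qnorm q ^+ 2)^-1) (qconj q).
Definition q1 := Qt 1 v0.
Definition pure (v : vec3) := Qt 0 v.

(* sqrt via the polar form q = |q| [cos phi, u sin phi], phi in [0, pi],
   u = Im q / ||Im q|| (u is irrelevant when Im q = 0, since then
   sin (phi/2) = 0 for q a positive real). *)
Definition qangle (q : quat) : R := acos (qre q / qnorm q).
Definition qaxis (q : quat) : vec3 := vscale ((vnorm (qim q))^-1) (qim q).
Definition qsqrt (q : quat) : quat :=
  qscale (Num.sqrt (qnorm q))
    (Qt (cos (qangle q / 2)) (vscale (sin (qangle q / 2)) (qaxis q))).

Definition nonpos_real (q : quat) : Prop := qim q = v0 /\ qre q <= 0.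

Definition cr (a b c d : quat) : quat :=
  qmul (qmul (qmul (qsub a b) (qinv (qsub b c))) (qsub c d)) (qinv (qsub d a)).

Definition fX (a b c d : quat) : quat :=
  qmul (qmul (qsub b a) (qinv (qsub c a))) (qsqrt (cr c a b d)).
Definition fdiag (a b c d : quat) : quat :=
  qmul (qinv (qadd (fX a b c d) q1)) (qadd (qmul (fX a b c d) c) b).

(* all inverses and square roots in f(a,b,c,d) exist *)
Definition fdiag_defined (a b c d : quat) : Prop :=
  [/\ c <> a, a <> b, d <> c, ~ nonpos_real (cr c a b d)
    & qadd (fX a b c d) q1 <> Qt 0 v0].

Definition all_in (P : vec3 -> Prop) (ps : seq vec3) : Prop :=
  foldr (fun x acc => P x /\ acc) True ps.

Fixpoint pairwise_distinct (ps : seq vec3) : Prop :=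
  if ps is x :: qs then all_in (fun y => x <> y) qs /\ pairwise_distinct qs
  else True.

Definition curve := int -> vec3.

Definition gq (g : curve) (j : int) : quat := pure (g j).

Definition ptA (g : curve) (i : int) : vec3 :=
  qim (fdiag (gq g (i + 2)) (gq g (i - 1)) (gq g i) (gq g (i + 1))).
Definition ptB (g : curve) (i : int) : vec3 :=
  qim (fdiag (gq g (i - 1)) (gq g i) (gq g (i + 1)) (gq g (i + 2))).
Definition ptC (g : curve) (i : int) : vec3 :=
  qim (fdiag (gq g i) (gq g (i + 1)) (gq g (i + 2)) (gq g (i - 1))).
Definition ptD (g : curve) (i : int) : vec3 :=
  qim (fdiag (gq g (i + 1)) (gq g (i + 2)) (gq g (i - 1)) (gq g i)).

(* All inverses and square roots in the definitions of A_i..D_i and of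
   cr(g_{i-1},g_i,g_{i+1},g_{i+2}) exist. *)
Definition inserting_defined (g : curve) (i : int) : Prop :=
  [/\ pairwise_distinct [:: g (i - 1); g i; g (i + 1); g (i + 2)],
      fdiag_defined (gq g (i + 2)) (gq g (i - 1)) (gq g i) (gq g (i + 1)),
      fdiag_defined (gq g (i - 1)) (gq g i) (gq g (i + 1)) (gq g (i + 2)),
      fdiag_defined (gq g i) (gq g (i + 1)) (gq g (i + 2)) (gq g (i - 1))
    & fdiag_defined (gq g (i + 1)) (gq g (i + 2)) (gq g (i - 1)) (gq g i)].

Definition collinear (ps : seq vec3) : Prop :=
  exists (p v : vec3), all_in (fun x => exists t : R, x = vadd p (vscale t v)) ps.

Definition in_affine_hull (c : vec3) (ps : seq vec3) : Prop :=
  exists ws : seq R, size ws = size ps /\ \sum_(w <- ws) w = 1 /\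
    c = foldr vadd v0 [seq vscale wp.1 wp.2 | wp <- zip ws ps].

(* (c, rho) is the circle through A_i, B_i, C_i, D_i: the points are not
   collinear (so they determine at most one circle), c lies in their plane,
   all points are at distance rho from c, and 0 < rho. *)
Definition osc_circle (g : curve) (i : int) (c : vec3) (rho : R) : Prop :=
  let ps := [:: ptA g i; ptB g i; ptC g i; ptD g i] in
  [/\ 0 < rho, ~ collinear ps, in_affine_hull c ps
    & all_in (fun x => vnorm (vsub x c) = rho) ps].

Definition curvature (rho : R) : R := rho^-1.
Definition normalN (g : curve) (i : int) (c : vec3) (rho : R) : vec3 :=
  vscale (rho^-1) (vsub c (ptB g i)).

Definition torsion (g : curve) (i : int) (c : vec3) (rho : R) : R :=
  - (9 * dot (qim (cr (gq g (i - 1)) (gq g i) (gq g (i + 1)) (gq g (i + 2))))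
             (normalN g i c rho))
  / (2 * curvature rho * vnorm (vsub (g i) (g (i + 1))) ^+ 2).

Definition planar (g : curve) : Prop :=
  exists (p n : vec3), n <> v0 /\ forall j : int, dot (vsub (g j) p) n = 0.

End Quaternions.

From mathcomp Require Import all_boot all_order all_algebra.
From mathcomp Require Import all_classical all_reals all_analysis.
From mathcomp Require Import ring lra.
Set Implicit Arguments.
Unset Strict Implicit.
Unset Printing Implicit Defensive.
Import Order.TTheory GRing.Theory Num.Theory.
Local Open Scope ring_scope.

(* Translate the plane of the curve so that it becomes the orthogonal
   complement of its normal n.  The pure quaternions orthogonal to n and the
   commutative subalgebra R + R n behave like the "odd" and "even" parts of a
   Z/2-grading: the product of two orthogonal vectors lies in R + R n, an
   element of R + R n times an orthogonal vector is again orthogonal, and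
   R + R n is closed under inversion and the polar square root.  Hence the
   cross-ratio of four coplanar points lies in R + R n, i.e. its imaginary part
   is parallel to n, while the translation-equivariant diagonal point f of four
   coplanar points stays in the plane.  So A_i, ..., D_i, the centre of k_i and
   therefore N_i lie in the plane, and <Im cr, N_i> = 0. *)

Section Quaternions.
Variable R : realType.
Implicit Types (p q r t : quat R) (u v w n : vec3 R).

Ltac qvec_ring :=
  repeat match goal with
  | q : quat _ |- _ => destruct q as [? [? ? ?]]
  | v : vec3 _ |- _ => destruct v
  end;
  rewrite /qmul /qsub /qadd /q1 /pure /qscale /qconj
          /vsub /vadd /vopp /vscale /cross /dot /v0 /=;
  first [congr (Qt _ (V3 _ _ _)) | congr (V3 _ _ _) | idtac]; simpl; ring.

Lemma qmulA p q r : qmul (qmul p q) r = qmul p (qmul q r).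
Proof. qvec_ring. Qed.

Lemma qmulDr p q r : qmul p (qadd q r) = qadd (qmul p q) (qmul p r).
Proof. qvec_ring. Qed.

Lemma qmul1 q : qmul (q1 R) q = q.
Proof. qvec_ring. Qed.

Lemma qsub_translate p q t : qsub (qadd p t) (qadd q t) = qsub p q.
Proof. qvec_ring. Qed.

Lemma qsubK p t : qadd (qsub p t) t = p.
Proof. qvec_ring. Qed.

Lemma qsub_pure u v : qsub (pure u) (pure v) = pure (vsub u v).
Proof. qvec_ring. Qed.

Lemma dotDl u v w : dot (vadd u v) w = dot u w + dot v w.
Proof. qvec_ring. Qed.

Lemma dotZl (k : R) u w : dot (vscale k u) w = k * dot u w.
Proof. qvec_ring. Qed.

Lemma dot0l w : dot (v0 R) w = 0.
Proof. qvec_ring. Qed.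

Lemma dotBl u v w : dot (vsub u v) w = dot u w - dot v w.
Proof. qvec_ring. Qed.

Lemma dotZr (k : R) u w : dot u (vscale k w) = k * dot u w.
Proof. qvec_ring. Qed.

Lemma dot_cross_l n u : dot (cross n u) n = 0.
Proof. qvec_ring. Qed.

Lemma dotC u v : dot u v = dot v u.
Proof. qvec_ring. Qed.

Lemma dot_self_ge0 u : 0 <= dot u u.
Proof. by case: u => x y z; rewrite /dot /=; nra. Qed.

Lemma dot_self_eq0 u : dot u u = 0 -> u = v0 R.
Proof.
case: u => x y z; rewrite /dot /= => u0.
have -> : x = 0 by nra.
have -> : y = 0 by nra.
by have -> : z = 0 by nra.
Qed.

Lemma qmulVq q : q <> Qt 0 (v0 R) -> qmul (qinv q) q = q1 R.
Proof.
case: q => r u q0.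
have u_ge0 := dot_self_ge0 u.
have normq : qnorm (Qt r u) ^+ 2 = r ^+ 2 + dot u u.
  by rewrite /qnorm sqr_sqrtr // addr_ge0 ?sqr_ge0.
have normq_neq0 : r ^+ 2 + dot u u != 0.
  apply/eqP => normq0; apply: q0.
  have -> : r = 0 by nra.
  by have -> : u = v0 R by apply: dot_self_eq0; nra.
rewrite /qinv normq; move: normq_neq0; case: u {u_ge0 normq q0} => x y z.
rewrite /qmul /qscale /qconj /q1 /vscale /vopp /vadd /dot /cross /v0 /= => normq_neq0.
by congr (Qt _ (V3 _ _ _)); field.
Qed.

Lemma cr_translate a b c d t :
  cr (qadd a t) (qadd b t) (qadd c t) (qadd d t) = cr a b c d.
Proof. by rewrite /cr !qsub_translate. Qed.

Lemma fX_translate a b c d t :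
  fX (qadd a t) (qadd b t) (qadd c t) (qadd d t) = fX a b c d.
Proof. by rewrite /fX cr_translate !qsub_translate. Qed.

Lemma fdiag_translate a b c d t : qadd (fX a b c d) (q1 R) <> Qt 0 (v0 R) ->
  fdiag (qadd a t) (qadd b t) (qadd c t) (qadd d t) = qadd (fdiag a b c d) t.
Proof.
move=> X1_neq0; rewrite /fdiag fX_translate.
have -> : forall X, qadd (qmul X (qadd c t)) (qadd b t) =
                    qadd (qadd (qmul X c) b) (qmul (qadd X (q1 R)) t).
  by move=> X; qvec_ring.
by rewrite qmulDr -qmulA qmulVq // qmul1.
Qed.

Definition axial n q := exists s, qim q = vscale s n.

Definition ortho n q := qre q = 0 /\ exists u, qim q = cross n u.

Lemma axial1 n : axial n (q1 R).
Proof. by exists 0; qvec_ring. Qed.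

Lemma axialD n p q : axial n p -> axial n q -> axial n (qadd p q).
Proof. by move=> [s ps] [s' qs']; exists (s + s'); rewrite /= ps qs'; qvec_ring. Qed.

Lemma axialM n p q : axial n p -> axial n q -> axial n (qmul p q).
Proof.
move=> [s ps] [s' qs']; exists (qre p * s' + qre q * s).
by rewrite /= ps qs'; qvec_ring.
Qed.

Lemma axialV n q : axial n q -> axial n (qinv q).
Proof. by move=> [s qs]; exists (- ((qnorm q ^+ 2)^-1 * s)); rewrite /= qs; qvec_ring. Qed.

Lemma axial_sqrt n q : axial n q -> axial n (qsqrt q).
Proof.
move=> [s qs].
exists (Num.sqrt (qnorm q) * sin (qangle q / 2) * (vnorm (qim q))^-1 * s).
by rewrite /qsqrt /qaxis /= qs; qvec_ring.
Qed.

Lemma orthoD n p q : ortho n p -> ortho n q -> ortho n (qadd p q).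
Proof.
move=> [p0 [u pu]] [q0 [v qv]]; split; first by rewrite /= p0 q0 addr0.
by exists (vadd u v); rewrite /= pu qv; qvec_ring.
Qed.

Lemma orthoB n p q : ortho n p -> ortho n q -> ortho n (qsub p q).
Proof.
move=> [p0 [u pu]] [q0 [v qv]]; split; first by rewrite /= p0 q0 subr0.
by exists (vsub u v); rewrite /= pu qv; qvec_ring.
Qed.

Lemma orthoV n q : ortho n q -> ortho n (qinv q).
Proof.
move=> [q0 [u qu]]; split; first by rewrite /= q0 mulr0.
by exists (vscale (- (qnorm q ^+ 2)^-1) u); rewrite /= qu; qvec_ring.
Qed.

(* n . (u x v) is the coefficient because (n x u) x (n x v) = (n . (u x v)) n. *)
Lemma orthoM_axial n p q : ortho n p -> ortho n q -> axial n (qmul p q).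
Proof.
move=> [p0 [u pu]] [q0 [v qv]]; exists (dot n (cross u v)).
by rewrite /= p0 q0 pu qv; qvec_ring.
Qed.

Lemma axialM_ortho n p q : axial n p -> ortho n q -> ortho n (qmul p q).
Proof.
move=> [s ps] [q0 [u qu]]; split; first by rewrite /= ps q0 qu; qvec_ring.
exists (vadd (vscale (qre p) u) (vscale s (cross n u))).
by rewrite /= ps q0 qu; qvec_ring.
Qed.

Lemma cr_axial n a b c d :
  ortho n a -> ortho n b -> ortho n c -> ortho n d -> axial n (cr a b c d).
Proof.
move=> oa ob oc od; apply: orthoM_axial; last by apply/orthoV/orthoB.
apply: axialM_ortho; last exact: orthoB.
by apply: orthoM_axial; [apply: orthoB | apply/orthoV/orthoB].
Qed.

Lemma fdiag_ortho n a b c d :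
  ortho n a -> ortho n b -> ortho n c -> ortho n d -> ortho n (fdiag a b c d).
Proof.
move=> oa ob oc od.
have X_axial : axial n (fX a b c d).
  apply: axialM; last exact/axial_sqrt/cr_axial.
  by apply: orthoM_axial; [apply: orthoB | apply/orthoV/orthoB].
apply: axialM_ortho; first exact/axialV/axialD/axial1.
by apply: orthoD => //; apply: axialM_ortho.
Qed.

(* Every vector orthogonal to n is a cross product with n:
   n x (u x n) = (n . n) u - (n . u) n. *)
Lemma ortho_pure n u : n <> v0 R -> dot u n = 0 -> ortho n (pure u).
Proof.
move=> n0 un0; split => //; exists (vscale (dot n n)^-1 (cross u n)).
have -> : cross n (vscale (dot n n)^-1 (cross u n)) =
    vsub (vscale ((dot n n)^-1 * dot n n) u) (vscale ((dot n n)^-1 * dot u n) n).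
  by qvec_ring.
have nn0 : dot n n != 0 by apply/eqP => /dot_self_eq0.
by rewrite mulVf // un0 mulr0 /=; qvec_ring.
Qed.

Lemma dot_affine_comb n (e : R) (ws : seq R) (ps : seq (vec3 R)) :
  size ws = size ps -> all_in (fun x => dot x n = e) ps ->
  dot (foldr (@vadd R) (v0 R) [seq vscale wp.1 wp.2 | wp <- zip ws ps]) n =
  (\sum_(w <- ws) w) * e.
Proof.
elim: ps ws => [|x ps IH] [|w ws] //=; first by rewrite dot0l big_nil mul0r.
move=> [/IH sz_ws] [xe /sz_ws pse].
by rewrite dotDl dotZl xe pse big_cons mulrDl.
Qed.

Lemma sub_all_in (P Q : vec3 R -> Prop) (ps : seq (vec3 R)) :
  (forall x, P x -> Q x) -> all_in P ps -> all_in Q ps.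
Proof. by move=> PQ; elim: ps => //= x ps IH [/PQ Qx /IH]. Qed.

Section Plane.
Variables (p n : vec3 R).
Hypothesis n_neq0 : n <> v0 R.

Definition on_plane x := dot (vsub x p) n = 0.

Lemma on_plane_ortho x : on_plane x -> ortho n (qsub (pure x) (pure p)).
Proof. by rewrite qsub_pure; apply: ortho_pure. Qed.

Lemma cr_on_plane_axial a b c d : on_plane a -> on_plane b -> on_plane c -> on_plane d ->
  axial n (cr (pure a) (pure b) (pure c) (pure d)).
Proof.
move=> /on_plane_ortho oa /on_plane_ortho ob /on_plane_ortho oc /on_plane_ortho od.
rewrite -[pure a](qsubK _ (pure p)) -[pure b](qsubK _ (pure p)).
rewrite -[pure c](qsubK _ (pure p)) -[pure d](qsubK _ (pure p)) cr_translate.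
exact: cr_axial.
Qed.

Lemma fdiag_on_plane a b c d :
  on_plane a -> on_plane b -> on_plane c -> on_plane d ->
  qadd (fX (pure a) (pure b) (pure c) (pure d)) (q1 R) <> Qt 0 (v0 R) ->
  on_plane (qim (fdiag (pure a) (pure b) (pure c) (pure d))).
Proof.
move=> /on_plane_ortho oa /on_plane_ortho ob /on_plane_ortho oc /on_plane_ortho od X1.
have [_ [u fu]] := fdiag_ortho oa ob oc od.
rewrite -[pure a](qsubK _ (pure p)) -[pure b](qsubK _ (pure p)).
rewrite -[pure c](qsubK _ (pure p)) -[pure d](qsubK _ (pure p)) fdiag_translate.
  have -> : forall F, qim (qadd F (pure p)) = vadd (qim F) p by [].
  by rewrite /on_plane fu dotBl dotDl dot_cross_l add0r subrr.
by rewrite -(fX_translate _ _ _ _ (pure p)) !qsubK.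
Qed.

Lemma affine_hull_on_plane x ps : all_in on_plane ps -> in_affine_hull x ps -> on_plane x.
Proof.
move=> ps_on [ws [sz [sum1 ->]]].
rewrite /on_plane dotBl (dot_affine_comb (e := dot p n)) // ?sum1 ?mul1r ?subrr //.
by apply: sub_all_in ps_on => y; rewrite /on_plane dotBl => /subr0_eq.
Qed.

Lemma dot_normal_chord (s k : R) x y : on_plane x -> on_plane y ->
  dot (vscale s n) (vscale k (vsub x y)) = 0.
Proof.
rewrite /on_plane !dotBl => /subr0_eq xn /subr0_eq yn.
by rewrite dotZl dotZr dotC dotBl xn yn subrr !mulr0.
Qed.

End Plane.
End Quaternions.

Theorem mainTheorem1 (R : realType) (g : curve R) (i : int) (c : vec3 R) (rho : R) :
  planar g -> inserting_defined g i -> osc_circle g i c rho ->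
  torsion g i c rho = 0.
Proof.
move=> [p [n [n_neq0 g_on]]] [_ dA dB dC dD] [_ _ c_hull _].
have ABCD_on : all_in (on_plane p n) [:: ptA g i; ptB g i; ptC g i; ptD g i].
  case: dA dB dC dD => [_ _ _ _ hA] [_ _ _ _ hB] [_ _ _ _ hC] [_ _ _ _ hD].
  by do !split; apply: (fdiag_on_plane n_neq0) => //; exact: g_on.
have c_on := affine_hull_on_plane ABCD_on c_hull.
have [_ [B_on _]] := ABCD_on.
have [s crs] := cr_on_plane_axial n_neq0 (g_on (i - 1)) (g_on i) (g_on (i + 1)) (g_on (i + 2)).
by rewrite /torsion /normalN crs (dot_normal_chord _ _ c_on B_on) mulr0 oppr0 mul0r.
Qed.
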